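(* Let $c\in\mathbb{N}$. There exists a strategy $\sigma_0$ of player $0$ that is a solution to the NCNS problem with threshold $c$ (i.e., every $\sigma_0$-fixed NE $\sigma$ satisfies $\mathrm{cost}_0(\mathrm{out}(\sigma))\le c$) if and only if there exists a $c$-witness.
   Context: Reachability game with one-player environment: a finite set $V$ of vertices, edges $E\subseteq V\times V$ (each vertex has a successor), initial vertex $v_0$, two players $0$ and $1$ owning a partition $V_0\uplus V_1$ of $V$, weight functions $w_0,w_1:E\to\mathbb{N}$ and target sets $T_0,T_1\subseteq V$. For a play (infinite path) $\pi$, $\mathrm{cost}_i(\pi)$ is the sum of $w_i$ over the edges of the shortest prefix of $\pi$ ending in $T_i$, and $+\infty$ if none. A strategy of player $i$ maps each finite path ending in $V_i$ to a successor of its last vertex. Given $\sigma_0$, a profile $(\sigma_0,\sigma_1)$ is a $\sigma_0$-fixed NE if for every strategy $\tau_1$ of player $1$, $\mathrm{cost}_1(\mathrm{out}(\sigma_0,\sigma_1))\le\mathrm{cost}_1(\mathrm{out}(\sigma_0,\tau_1))$, where $\mathrm{out}$ is the outcome play from $v_0$. A deviation of a play $\pi$ is a finite path $hv$ ($v\in V$) such that $h$ is a nonempty prefix of $\pi$ but $hv$ is not. A $c$-witness is a play $\pi$ from $v_0$ such that $\mathrm{cost}_0(\pi)\le c$ and, with $d=\mathrm{cost}_1(\pi)$, for every deviation $hv$ of $\pi$, player $0$ has a strategy from $v$ in the two-player zero-sum game (player $0$ against player $1$) such that every play $\pi'$ starting at $v$ consistent with it satisfies $\mathrm{cost}_0(h\pi')\le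 c$ or $\mathrm{cost}_1(h\pi')>d$.
   Formalization: In a c-witness the condition on deviations hv applies only when the last vertex of h belongs to player 1, so deviations from vertices of $V_0$ impose no condition. The statement above fails without it. *)

From mathcomp Require Import all_boot.
From Stdlib Require Import ClassicalEpsilon.
Set Implicit Arguments. Unset Strict Implicit. Unset Printing Implicit Defensive.

Record game (V : finType) := Game {
  E : rel V;
  succ_ex : forall v, exists v', E v v';
  v0 : V;
  V1 : {set V};                           (* vertices of player 1; V_0 = ~: V1 *)
  w0 : V -> V -> nat;                     (* weights of player 0 (used on edges only) *)
  w1 : V -> V -> nat;
  T0 : {set V};
  T1 : {set V}
}.

Section Game.
Variables (V : finType) (G : game V).

(* Costs live in option nat: None = +infinity. *)
Definition ole (a b : option nat) : bool :=
  match a, b with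
  | _, None => true
  | None, Some _ => false
  | Some x, Some y => x <= y
  end.
Definition olt (a b : option nat) : bool := ~~ ole b a.

Definition play (p : nat -> V) : Prop := forall n, E G (p n) (p n.+1).

Definition prefix (p : nat -> V) (n : nat) : seq V := [seq p i | i <- iota 0 n.+1].

Definition cost (w : V -> V -> nat) (T : {set V}) (p : nat -> V) : option nat :=
  match excluded_middle_informative (exists n, (fun n => p n \in T) n) with
  | left H => Some (\sum_(i < ex_minn H) w (p i) (p i.+1))
  | right _ => None
  end.

Definition cost0 := cost (w0 G) (T0 G).
Definition cost1 := cost (w1 G) (T1 G).

(* strategies: functions from finite paths to vertices; [i = false] is player 0,
   [i = true] is player 1 *)
Definition strat := seq V -> V.
Definition owns (i : bool) (v : V) : bool := (v \in V1 G) == i.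

Definition valid_strat (i : bool) (s : strat) : Prop :=
  forall (x : V) (h : seq V), path (E G) x h -> owns i (last x h) ->
    E G (last x h) (s (x :: h)).

Fixpoint outp (s0 s1 : strat) (n : nat) : seq V :=
  match n with
  | 0 => [:: v0 G]
  | n'.+1 => let h := outp s0 s1 n' in
             rcons h (if last (v0 G) h \in V1 G then s1 h else s0 h)
  end.
Definition out (s0 s1 : strat) : nat -> V := fun n => last (v0 G) (outp s0 s1 n).

Definition fixed_NE (s0 s1 : strat) : Prop :=
  valid_strat true s1 /\
  forall t1, valid_strat true t1 -> ole (cost1 (out s0 s1)) (cost1 (out s0 t1)).

Definition NCNS_solution (c : nat) (s0 : strat) : Prop :=
  valid_strat false s0 /\
  forall s1, fixed_NE s0 s1 -> ole (cost0 (out s0 s1)) (Some c).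

Definition consistent0 (s : strat) (v : V) (p : nat -> V) : Prop :=
  p 0 = v /\ play p /\ forall n, owns false (p n) -> p n.+1 = s (prefix p n).

Definition catp (h : seq V) (p : nat -> V) : nat -> V :=
  fun n => if n < size h then nth (v0 G) h n else p (n - size h).

Definition witness (c : nat) (p : nat -> V) : Prop :=
  play p /\ p 0 = v0 G /\ ole (cost0 p) (Some c) /\
  forall (n : nat) (v : V),
    p n \in V1 G -> E G (p n) v -> v != p n.+1 ->
    exists t, valid_strat false t /\
      forall p', consistent0 t v p' ->
        ole (cost0 (catp (prefix p n) p')) (Some c)
        || olt (cost1 p) (cost1 (catp (prefix p n) p')).

End Game.

From mathcomp Require Import all_boot.
(* Imported after all_boot so that [prefix] denotes Defs.prefix, not seq's. *)
From Pilot Require Import Defs.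
From mathcomp Require Import zify.
From Stdlib Require Import ClassicalEpsilon FunctionalExtensionality.
Set Implicit Arguments. Unset Strict Implicit. Unset Printing Implicit Defensive.

(* Costs are well ordered, so against any sigma0 player 1 has a best response:
   sigma0-fixed NEs exist.  Moreover every play consistent with sigma0 is the
   outcome of sigma0 against a player-1 strategy that follows it.
   If sigma0 solves the NCNS problem, the outcome rho of a sigma0-fixed NE is a
   c-witness: after a deviation hv player 0 keeps playing sigma0 (with history h);
   a resulting play is consistent with sigma0, so if it were not more costly than
   rho for player 1, following it would again be a sigma0-fixed NE, whose cost for
   player 0 is at most c.
   Conversely, given a c-witness rho, player 0 follows rho and, after the first
   deviation hv from rho, plays the strategy that the witness provides for hv.
   The outcome of a sigma0-fixed NE is either rho, or leaves rho first at a
   player-1 vertex and is then consistent with that strategy; as following rho is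
   an option for player 1, the outcome costs player 1 at most cost1 rho, hence
   player 0 at most c. *)

Section NCNS.
Variables (V : finType) (G : game V).

Lemma size_prefix (f : nat -> V) n : size (prefix f n) = n.+1.
Proof. by rewrite size_map size_iota. Qed.

Lemma nth_prefix x (f : nat -> V) n i : i <= n -> nth x (prefix f n) i = f i.
Proof. by move=> le_in; rewrite (nth_map 0) ?size_iota // nth_iota. Qed.

Lemma prefixS (f : nat -> V) n : prefix f n.+1 = rcons (prefix f n) (f n.+1).
Proof. by rewrite /prefix -addn1 iotaD map_cat cats1. Qed.

Lemma last_prefix x (f : nat -> V) n : last x (prefix f n) = f n.
Proof. by case: n => [|n] //; rewrite prefixS last_rcons. Qed.

Lemma eq_prefix (f g : nat -> V) n :
  (forall i, i <= n -> f i = g i) -> prefix f n = prefix g n.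
Proof. by move=> efg; apply/eq_in_map => i; rewrite mem_iota => /andP[_ /efg]. Qed.

Lemma prefix_path (f : nat -> V) n :
  (forall k, k < n -> E G (f k) (f k.+1)) -> path (E G) (f 0) (behead (prefix f n)).
Proof.
elim: n => [//|n IHn] f_edges.
have -> : behead (prefix f n.+1) = rcons (behead (prefix f n)) (f n.+1) by rewrite prefixS.
rewrite rcons_path IHn => [|k lt_kn]; last exact/f_edges/ltnW.
by rewrite -[last _ _]/(last (f 0) (prefix f n)) last_prefix f_edges.
Qed.

Lemma valid_strat_prefix i s (f : nat -> V) n :
  valid_strat G i s -> (forall k, k < n -> E G (f k) (f k.+1)) -> owns G i (f n) ->
  E G (f n) (s (prefix f n)).
Proof.
move=> s_valid f_edges own_n.
have := s_valid _ _ (prefix_path f_edges).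
by rewrite -[last _ _]/(last (f 0) (prefix f n)) last_prefix; apply.
Qed.

Lemma outE s0 s1 n :
  out G s0 s1 n.+1 = if out G s0 s1 n \in V1 G then s1 (prefix (out G s0 s1) n)
                     else s0 (prefix (out G s0 s1) n).
Proof.
have outp_prefix k : outp G s0 s1 k = prefix (out G s0 s1) k.
  by elim: k => [//|k IHk]; rewrite prefixS -IHk /= [out _ _ _ k.+1]/out /= last_rcons.
by rewrite -outp_prefix {1}/out /= last_rcons.
Qed.

Lemma out_consistent0 s0 s1 :
  valid_strat G false s0 -> valid_strat G true s1 -> consistent0 G s0 (v0 G) (out G s0 s1).
Proof.
move=> s0_valid s1_valid; split=> //; split=> [|k]; last first.
  by rewrite outE /owns; case: (_ \in _).
suff out_edges n k : k < n -> E G (out G s0 s1 k) (out G s0 s1 k.+1).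
  by move=> k; apply: (out_edges k.+1).
elim: n k => [//|n IHn] k; rewrite ltnS leq_eqVlt => /predU1P[->|]; last exact: IHn.
rewrite outE; case: ifPn => own_n.
  by apply: valid_strat_prefix s1_valid IHn _; rewrite /owns own_n.
by apply: valid_strat_prefix s0_valid IHn _; rewrite /owns (negbTE own_n).
Qed.

Lemma out_unique s0 s1 (q : nat -> V) :
  q 0 = v0 G ->
  (forall k, q k.+1 = if q k \in V1 G then s1 (prefix q k) else s0 (prefix q k)) ->
  out G s0 s1 = q.
Proof.
move=> q0 q_step; apply: functional_extensionality => k.
suff out_q n i : i <= n -> out G s0 s1 i = q i by exact: (out_q k).
elim: n i => [|n IHn] i; first by rewrite leqn0 => /eqP->.
rewrite leq_eqVlt => /predU1P[->|]; last exact: IHn.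
by rewrite outE q_step IHn // (eq_prefix IHn).
Qed.

Definition succ_of (v : V) : V := xchoose (succ_ex G v).

Lemma succ_ofP v : E G v (succ_of v).
Proof. exact: xchooseP. Qed.

Definition move_any : strat V := fun l => succ_of (last (v0 G) l).

Lemma move_any_valid i : valid_strat G i move_any.
Proof. by move=> x h _ _; apply: succ_ofP. Qed.

Definition follow (q : nat -> V) (s : strat V) : strat V :=
  fun l => if l == prefix q (size l).-1 then q (size l) else s l.

Lemma follow_prefix q s n : follow q s (prefix q n) = q n.+1.
Proof. by rewrite /follow size_prefix eqxx. Qed.

Lemma follow_valid i q s : play G q -> valid_strat G i s -> valid_strat G i (follow q s).
Proof.
move=> q_play s_valid x h xh_path own; rewrite /follow.
case: eqP => [xh_pre|_]; last exact: s_valid.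
by rewrite -[last x h]/(last x (x :: h)) {1}xh_pre last_prefix.
Qed.

Lemma out_follow s0 s1 q : consistent0 G s0 (v0 G) q -> out G s0 (follow q s1) = q.
Proof.
move=> [q0 [_ q_s0]]; apply: out_unique => // k.
case: ifPn => [_|own_k]; first by rewrite follow_prefix.
by rewrite q_s0 // /owns (negbTE own_k).
Qed.

Lemma catp_prefix_le (p r : nat -> V) n k : k <= n -> catp G (prefix p n) r k = p k.
Proof. by move=> le_kn; rewrite /catp size_prefix ltnS le_kn nth_prefix. Qed.

Lemma catp_prefix_addn (p r : nat -> V) n j : catp G (prefix p n) r (n.+1 + j) = r j.
Proof. by rewrite /catp size_prefix ltnNge leq_addr addKn. Qed.

Lemma prefix_catp (p r : nat -> V) n j :
  prefix (catp G (prefix p n) r) (n.+1 + j) = prefix p n ++ prefix r j.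
Proof.
elim: j => [|j IHj].
  rewrite addn0 prefixS (eq_prefix (g := p)) => [|i]; last exact: catp_prefix_le.
  by rewrite cats1 -[n.+1]addn0 catp_prefix_addn.
by rewrite addnS prefixS IHj -addnS catp_prefix_addn (prefixS r) rcons_cat.
Qed.

Lemma catp_prefix_shift (p q : nat -> V) n :
  (forall i, i <= n -> q i = p i) -> catp G (prefix p n) (fun j => q (n.+1 + j)) = q.
Proof.
move=> eq_qp; apply: functional_extensionality => k.
have [le_kn|/subnKC <-] := leqP k n; first by rewrite catp_prefix_le ?eq_qp.
by rewrite catp_prefix_addn.
Qed.

Lemma play_catp (p r : nat -> V) n :
  play G p -> E G (p n) (r 0) -> play G r -> play G (catp G (prefix p n) r).
Proof.
move=> p_play edge_n r_play k; case: (ltngtP k n) => [lt_kn|/subnKC <-|->].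
- by rewrite !catp_prefix_le ?(ltnW lt_kn).
- by rewrite -addnS !catp_prefix_addn.
- by rewrite catp_prefix_le // -[n.+1]addn0 catp_prefix_addn.
Qed.

Definition shift (h : seq V) (s : strat V) : strat V :=
  fun l => if E G (last (v0 G) h) (head (v0 G) l) then s (h ++ l) else move_any l.

Lemma shift_valid i x h s :
  path (E G) x h -> valid_strat G i s -> valid_strat G i (shift (x :: h) s).
Proof.
move=> xh_path s_valid y l yl_path own; rewrite /shift /=.
case: ifP => [edge_y|_]; last exact: succ_ofP.
have := s_valid x (h ++ y :: l); rewrite cat_path last_cat /= xh_path edge_y yl_path.
by apply.
Qed.

Lemma consistent0_catp s0 (p r : nat -> V) n v :
  consistent0 G s0 (v0 G) p -> p n \in V1 G -> E G (p n) v ->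
  consistent0 G (shift (prefix p n) s0) v r ->
  consistent0 G s0 (v0 G) (catp G (prefix p n) r).
Proof.
move=> [p0 [p_play p_s0]] own_n edge_n [r0 [r_play r_s]].
split; first by rewrite catp_prefix_le.
split; first by apply: play_catp; rewrite ?r0.
move=> k; case: (ltngtP k n) => [lt_kn|/subnKC <-|->].
- rewrite !catp_prefix_le ?(ltnW lt_kn) // => /p_s0 ->.
  congr s0; apply: eq_prefix => i le_ik.
  by rewrite catp_prefix_le ?(leq_trans le_ik (ltnW lt_kn)).
- rewrite -addnS !catp_prefix_addn prefix_catp => /r_s ->.
  by rewrite /shift last_prefix -[head _ _]/(r 0) r0 edge_n.
- by rewrite catp_prefix_le // /owns own_n.
Qed.

Lemma ex_minimal (P : nat -> Prop) :
  (exists n, P n) -> exists2 m, P m & forall k, P k -> m <= k.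
Proof.
move=> [n Pn]; elim: n {-2}n (leqnn n) Pn => [|N IHN] n le_nN Pn.
  by exists n => // k _; move: le_nN; rewrite leqn0 => /eqP->.
case: (classic (exists2 k, k < n & P k)) => [[k lt_kn Pk]|no_smaller].
  by apply: (IHN k) => //; rewrite -ltnS (leq_trans lt_kn le_nN).
exists n => // k Pk; rewrite leqNgt; apply/negP => lt_kn; apply: no_smaller; by exists k.
Qed.

Lemma ole_trans a b d : ole a b -> ole b d -> ole a d.
Proof. by case: a; case: b; case: d => //= x y z; apply: leq_trans. Qed.

Lemma exists_ole_min (A : option nat -> Prop) :
  (exists a, A a) -> exists2 m, A m & forall a, A a -> ole m a.
Proof.
case: (classic (exists k, A (Some k))) => [/ex_minimal[k Ak k_min] _|no_finite].
  by exists (Some k) => // -[j /k_min|].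
case=> -[k Ak|A_inf]; first by case: no_finite; exists k.
by exists None => // -[k Ak|] //; case: no_finite; exists k.
Qed.

Lemma exists_fixed_NE s0 : exists s1, fixed_NE G s0 s1.
Proof.
pose A a := exists2 t, valid_strat G true t & cost1 G (out G s0 t) = a.
have [|_ [t t_valid <-] t_min] := @exists_ole_min A.
  by exists (cost1 G (out G s0 move_any)), move_any; first exact: move_any_valid.
by exists t; split=> // t' t'_valid; apply: t_min; exists t'.
Qed.

Lemma fixed_NE_cost1_le s0 s1 q :
  fixed_NE G s0 s1 -> consistent0 G s0 (v0 G) q -> ole (cost1 G (out G s0 s1)) (cost1 G q).
Proof.
move=> [s1_valid s1_best] q_cons; rewrite -(out_follow s1 q_cons).
by apply/s1_best/follow_valid => //; case: q_cons => _ [].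
Qed.

Lemma fixed_NE_follow s0 s1 q :
  fixed_NE G s0 s1 -> consistent0 G s0 (v0 G) q ->
  ole (cost1 G q) (cost1 G (out G s0 s1)) -> fixed_NE G s0 (follow q s1).
Proof.
move=> [s1_valid s1_best] q_cons q_le; split.
  by apply: follow_valid => //; case: q_cons => _ [].
by move=> t t_valid; rewrite (out_follow s1 q_cons); apply: ole_trans q_le (s1_best t t_valid).
Qed.

Lemma NCNS_solution_witness c s0 : NCNS_solution G c s0 -> exists p, witness G c p.
Proof.
case=> s0_valid s0_sol; have [s1 s1_NE] := exists_fixed_NE s0.
have p_cons := out_consistent0 s0_valid s1_NE.1; set p := out G s0 s1 in p_cons *.
have [p0 [p_play _]] := p_cons.
exists p; split=> //; split=> //; split=> [|n v own_n edge_n _]; first exact: s0_sol.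
exists (shift (prefix p n) s0); split.
  exact: (shift_valid (prefix_path (fun k _ => p_play k)) s0_valid).
move=> r r_cons; have q_cons := consistent0_catp p_cons own_n edge_n r_cons.
set q := catp G (prefix p n) r in q_cons *.
have [q_le|] := boolP (ole (cost1 G q) (cost1 G p)); last by rewrite /olt => ->; rewrite orbT.
by rewrite -(out_follow s1 q_cons) s0_sol //; apply: fixed_NE_follow.
Qed.

Definition deviation_safe c (p : nat -> V) n v (t : strat V) : Prop :=
  forall r, consistent0 G t v r ->
    ole (cost0 G (catp G (prefix p n) r)) (Some c)
    || olt (cost1 G p) (cost1 G (catp G (prefix p n) r)).

Lemma witness_strategies c p :
  witness G c p -> exists tau : nat -> V -> strat V, forall n v,
    valid_strat G false (tau n v) /\
    (p n \in V1 G -> E G (p n) v -> v != p n.+1 -> deviation_safe c p n v (tau n v)).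
Proof.
case=> _ [_ [_ dev_safe]].
pose good (nv : nat * V) t := valid_strat G false t /\
  (p nv.1 \in V1 G -> E G (p nv.1) nv.2 -> nv.2 != p nv.1.+1 ->
   deviation_safe c p nv.1 nv.2 t).
have [tau tau_spec] : exists tau, forall nv, good nv (tau nv).
  apply: choice => -[n v]; rewrite /good /=.
  case: (classic (p n \in V1 G /\ E G (p n) v /\ v != p n.+1))
    => [[own_n [edge_n dev]]|no_dev].
    by have [t [t_valid t_safe]] := dev_safe n v own_n edge_n dev; exists t.
  by exists move_any; split=> [|own_n edge_n dev]; [apply: move_any_valid | case: no_dev].
by exists (fun n v => tau (n, v)) => n v; apply: (tau_spec (n, v)).
Qed.

Definition diverge (p : nat -> V) (l : seq V) : nat :=
  find (fun i => nth (v0 G) l i != p i) (iota 0 (size l)).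

Lemma diverge_prefix_cat p n l :
  diverge p (prefix p n ++ l) = n.+1 + diverge (fun i => p (n.+1 + i)) l.
Proof.
rewrite /diverge size_cat size_prefix iotaD find_cat size_iota ifN; last first.
  apply/hasPn => i; rewrite mem_iota add0n => /andP[_ le_in].
  by rewrite nth_cat size_prefix le_in nth_prefix ?eqxx.
rewrite add0n -[n.+1]addn0 iotaDl find_map addn0; congr addn; apply: eq_find => i.
by rewrite /preim /= nth_cat size_map size_iota ltnNge leq_addr addKn.
Qed.

Lemma diverge_prefix p n : diverge p (prefix p n) = n.+1.
Proof. by rewrite -[prefix p n]cats0 diverge_prefix_cat addn0. Qed.

Lemma diverge_deviation p n v l : v != p n.+1 -> diverge p (prefix p n ++ v :: l) = n.+1.
Proof. by move=> dev; rewrite diverge_prefix_cat /diverge /= addn0 dev addn0. Qed.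

(* For [l = prefix p n ++ v :: r] with [v != p n.+1], [diverge p l = n.+1], so
   [tau n v] is played on [v :: r]; the [move_any] branch only keeps the strategy
   valid on histories that do not start like [p]. *)
Definition deviation_strategy (p : nat -> V) (tau : nat -> V -> strat V) : strat V :=
  fun l => let k := diverge p l in
    if 0 < k < size l then tau k.-1 (nth (v0 G) l k) (drop k l) else move_any l.

Lemma deviation_strategy_valid p tau :
  (forall n v, valid_strat G false (tau n v)) -> valid_strat G false (deviation_strategy p tau).
Proof.
move=> tau_valid x h xh_path own; rewrite /deviation_strategy.
case: (diverge p (x :: h)) => [|i]; first exact: succ_ofP.
case: ifP => [/andP[_ lt_ih]|_]; last exact: succ_ofP.
have h_split : h = take i h ++ nth (v0 G) h i :: drop i.+1 h.
  by rewrite -drop_nth ?cat_take_drop.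
move: xh_path own; rewrite /= (drop_nth (v0 G) (lt_ih : i < size h)).
rewrite {1 2 3}h_split cat_path last_cat /=.
by case/and3P=> _ _; apply: tau_valid.
Qed.

Lemma follow_deviation p tau n (r : nat -> V) j :
  r 0 != p n.+1 ->
  follow p (deviation_strategy p tau) (prefix p n ++ prefix r j) = tau n (r 0) (prefix r j).
Proof.
move=> dev; have div_n := diverge_deviation (behead (prefix r j)) dev.
rewrite /follow ifN; last first.
  apply/eqP=> is_prefix; move: div_n.
  by rewrite is_prefix diverge_prefix size_cat !size_prefix; lia.
rewrite /deviation_strategy div_n ifT; last by rewrite size_cat !size_prefix; lia.
by rewrite nth_cat drop_size_cat size_prefix ?ltnn ?subnn.
Qed.

Lemma first_mismatch (T : eqType) (q p : nat -> T) :
  q 0 = p 0 -> (exists k, q k != p k) ->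
  exists2 n, (forall i, i <= n -> q i = p i) & q n.+1 != p n.+1.
Proof.
move=> eq0 ex_mismatch; case: (ex_minnP ex_mismatch) => -[|n]; first by rewrite eq0 eqxx.
move=> mismatch_n n_min; exists n => // i le_in.
by apply/eqP; apply: contraTT le_in => /n_min; rewrite -ltnNge.
Qed.

Lemma consistent0_suffix p tau (q : nat -> V) n :
  consistent0 G (follow p (deviation_strategy p tau)) (v0 G) q ->
  (forall i, i <= n -> q i = p i) -> q n.+1 != p n.+1 ->
  consistent0 G (tau n (q n.+1)) (q n.+1) (fun j => q (n.+1 + j)).
Proof.
move=> [_ [q_play q_s0]] eq_qp dev; split; first by rewrite addn0.
split=> [j|j own_j]; first by rewrite addnS; apply: q_play.
rewrite addnS q_s0 // -[in prefix q _](catp_prefix_shift eq_qp) prefix_catp.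
by rewrite follow_deviation addn0.
Qed.

Lemma witness_NCNS_solution c p : witness G c p -> exists s0, NCNS_solution G c s0.
Proof.
move=> p_wit; have [tau tau_spec] := witness_strategies p_wit.
case: p_wit => p_play [p0 [p_c _]].
set s0 := follow p (deviation_strategy p tau).
have s0_valid : valid_strat G false s0.
  by apply/follow_valid/deviation_strategy_valid => // n v; case: (tau_spec n v).
have p_cons : consistent0 G s0 (v0 G) p.
  by split=> //; split=> // k _; rewrite /s0 follow_prefix.
exists s0; split=> // s1 s1_NE.
have q_cons := out_consistent0 s0_valid s1_NE.1; set q := out G s0 s1 in q_cons *.
case: (classic (exists k, q k != p k)) => [mismatch|no_mismatch]; last first.
  suff -> : q = p by [].
  apply: functional_extensionality => k; apply/eqP.
  by apply: contra_notT no_mismatch; exists k.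
have [n eq_qp dev] := first_mismatch (etrans q_cons.1 (esym p0)) mismatch.
have own_n : p n \in V1 G.
  apply: contraTT dev => not_own.
  have own0_n : owns G false (q n) by rewrite /owns eq_qp // (negbTE not_own).
  by rewrite negbK q_cons.2.2 // (eq_prefix eq_qp) /s0 follow_prefix.
have edge_n : E G (p n) (q n.+1) by rewrite -eq_qp //; apply: q_cons.2.1.
have [_ /(_ own_n edge_n dev) tau_safe] := tau_spec n (q n.+1).
have := tau_safe _ (consistent0_suffix q_cons eq_qp dev).
rewrite catp_prefix_shift // => /orP[//|].
by rewrite /olt (fixed_NE_cost1_le s1_NE p_cons).
Qed.

End NCNS.

Theorem lemma27 (V : finType) (G : game V) (c : nat) :
  (exists s0 : strat V, NCNS_solution G c s0) <-> (exists p : nat -> V, witness G c p).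
Proof.
split=> [[s0 /NCNS_solution_witness]|[p /witness_NCNS_solution]] //.
Qed.
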